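(* Let $\mathbf C$ be a finite dimensional clone $\tau$-algebra. Then the map $a\mapsto R(a)^\top$ is an isomorphism of clone $\tau$-algebras from $\mathbf C$ onto the block algebra $R_{\mathbf C}^\top=\{R(a)^\top: a\in C\}$, which is a subalgebra of the full functional clone $\tau$-algebra with value domain the $\tau$-reduct $\mathbf C_\tau=(C,\sigma^{\mathbf C})_{\sigma\in\tau}$.
   Context: Let $\omega=\{1,2,\dots\}$. A clone $\tau$-algebra is an algebra $\mathbf C=(C,\sigma^{\mathbf C}\ (\sigma\in\tau),q_n^{\mathbf C}\ (n\ge0),\mathsf e_i^{\mathbf C}\ (i\ge1))$ with $\mathsf e_i$ nullary, $q_n$ of arity $n+1$, satisfying: (C1) $q_n(\mathsf e_i,x_1,\dots,x_n)=x_i$ ($1\le i\le n$); (C2) $q_n(\mathsf e_j,x_1,\dots,x_n)=\mathsf e_j$ ($j>n$); (C3) $q_n(x,\mathsf e_1,\dots,\mathsf e_n)=x$; (C4) $q_k(x,y_1,\dots,y_k)=q_n(x,y_1,\dots,y_k,\mathsf e_{k+1},\dots,\mathsf e_n)$ ($n>k$); (C5) $q_n(q_n(x,\mathbf y),\mathbf z)=q_n(x,q_n(y_1,\mathbf z),\dots,q_n(y_n,\mathbf z))$ with $\mathbf y,\mathbf z$ of length $n$; (C6) $q_n(\sigma(x_1,\dots,x_k),\mathbf y)=\sigma(q_n(x_1,\mathbf y),\dots,q_n(x_k,\mathbf y))$ for $\sigma\in\tau$ of arity $k$. An element $a$ is independent of $\mathsf e_n$ if $q_n(a,\mathsf e_1,\dots,\mathsf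 e_{n-1},\mathsf e_{n+1})=a$; its dimension $\gamma(a)$ is $\omega$ if it depends on infinitely many $\mathsf e_i$, $0$ if on none, and otherwise the largest $i$ with $a$ dependent on $\mathsf e_i$. $\mathbf C$ is finite dimensional if every element has finite dimension. A function $f:C^k\to C$ is $\mathbf C$-representable if $f(\mathsf e_1,\dots,\mathsf e_k)$ has dimension $\le k$ and $f(a_1,\dots,a_k)=q_k(f(\mathsf e_1,\dots,\mathsf e_k),a_1,\dots,a_k)$ for all $a_1,\dots,a_k\in C$. For $a$ of finite dimension, $R(a)$ is the set of all $\mathbf C$-representable functions $f$ (of any arity $n$) with $f(\mathsf e_1,\dots,\mathsf e_n)=a$. For a finitary $f:C^n\to C$ the top extension is $f^\top:C^\omega\to C$, $f^\top(s)=f(s_1,\dots,s_n)$; all members of $R(a)$ have the same top extension, denoted $R(a)^\top$. For a $\tau$-algebra $\mathbf A$, the full functional clone $\tau$-algebra with value domain $\mathbf A$ has universe all functions $A^\omega\to A$ and operations $\mathsf e_i(s)=s_i$, $q_n(\varphi,\psi_1,\dots,\psi_n)(s)=\varphi(s[\psi_1(s),\dots,\psi_n(s)])$, $\sigma(\psi_1,\dots,\psi_n)(s)=\sigma^{\mathbf A}(\psi_1(s),\dots,\psi_n(s))$, where $s[b_1,\dots,b_n]$ replaces the first $n$ entries of $s$ by $b_1,\dots,b_n$. *)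

From mathcomp Require Import all_boot.
Unset Printing Implicit Defensive.

(* Indices are shifted by one: [e i] stands for the paper's
   e_{i+1}, and an n-tuple (y_1,...,y_n) is a function ['I_n -> C] with
   [y i] = y_{i+1}. *)

Definition pad_e (C : Type) (e : nat -> C) (k n : nat) (y : 'I_k -> C) : 'I_n -> C :=
  fun i => match (insub (val i) : option 'I_k) with Some j => y j | None => e (val i) end.

Record CloneAlg (sym : Type) (ar : sym -> nat) := {
  carrier :> Type;
  op : forall s : sym, ('I_(ar s) -> carrier) -> carrier;
  q  : forall n : nat, carrier -> ('I_n -> carrier) -> carrier;
  e  : nat -> carrier;
  ax_C1 : forall n (i : 'I_n) (x : 'I_n -> carrier), q n (e i) x = x i;
  ax_C2 : forall n j (x : 'I_n -> carrier), n <= j -> q n (e j) x = e j;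
  ax_C3 : forall n (x : carrier), q n x (fun i : 'I_n => e i) = x;
  ax_C4 : forall k n (x : carrier) (y : 'I_k -> carrier), k < n ->
            q k x y = q n x (pad_e carrier e k n y);
  ax_C5 : forall n (x : carrier) (y z : 'I_n -> carrier),
            q n (q n x y) z = q n x (fun i => q n (y i) z);
  ax_C6 : forall (s : sym) n (x : 'I_(ar s) -> carrier) (y : 'I_n -> carrier),
            q n (op s x) y = op s (fun j => q n (x j) y)
}.

Arguments op {sym ar} c s _.
Arguments q {sym ar} c n _ _.
Arguments e {sym ar} c _.

Section CloneDefs.
Variables (sym : Type) (ar : sym -> nat) (C : CloneAlg sym ar).

(* a is independent of e_{m+1} (paper's e_n with n = m+1):
   q_{m+1}(a, e_1, ..., e_m, e_{m+2}) = a *)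
Definition indep (a : C) (m : nat) : Prop :=
  q C m.+1 a (fun i : 'I_m.+1 => if val i < m then e C (val i) else e C m.+1) = a.

(* gamma(a) <= k : a is independent of every e_j with j > k (1-based) *)
Definition dim_le (a : C) (k : nat) : Prop := forall m, k <= m -> indep a m.

Definition finite_dimensional : Prop := forall a : C, exists k, dim_le a k.

Definition evec (k : nat) : 'I_k -> C := fun i => e C (val i).

Definition representable (k : nat) (f : ('I_k -> C) -> C) : Prop :=
  dim_le (f (evec k)) k /\ forall a : 'I_k -> C, f a = q C k (f (evec k)) a.

Definition inR (a : C) (n : nat) (f : ('I_n -> C) -> C) : Prop :=
  representable n f /\ f (evec n) = a.

(* top extension f^T : C^omega -> C (sequences s : nat -> C, s i = s_{i+1}) *)
Definition top_ext (n : nat) (f : ('I_n -> C) -> C) : (nat -> C) -> C :=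
  fun s => f (fun i : 'I_n => s (val i)).

End CloneDefs.

Section FullFunctional.
Variables (sym : Type) (ar : sym -> nat) (A : Type)
          (opA : forall s : sym, ('I_(ar s) -> A) -> A).

Definition ff_e (i : nat) : (nat -> A) -> A := fun s => s i.

Definition seq_upd (n : nat) (s : nat -> A) (b : 'I_n -> A) : nat -> A :=
  fun j => match (insub j : option 'I_n) with Some i => b i | None => s j end.

Definition ff_q (n : nat) (phi : (nat -> A) -> A) (psi : 'I_n -> (nat -> A) -> A)
  : (nat -> A) -> A :=
  fun s => phi (seq_upd n s (fun i => psi i s)).

Definition ff_op (s : sym) (psi : 'I_(ar s) -> (nat -> A) -> A) : (nat -> A) -> A :=
  fun t => opA s (fun j => psi j t).

Definition ff_closed (S : ((nat -> A) -> A) -> Prop) : Prop :=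
  (forall i, S (ff_e i)) /\
  (forall n phi (psi : 'I_n -> _), S phi -> (forall i, S (psi i)) -> S (ff_q n phi psi)) /\
  (forall s (psi : 'I_(ar s) -> _), (forall j, S (psi j)) -> S (ff_op s psi)).

End FullFunctional.

Arguments indep {sym ar C} a m.
Arguments dim_le {sym ar C} a k.
Arguments finite_dimensional {sym ar} C.
Arguments evec {sym ar C} k _.
Arguments representable {sym ar C} k f.
Arguments inR {sym ar C} a n f.
Arguments top_ext {sym ar C} n f s.
Arguments ff_e {A} i s.
Arguments seq_upd {A} n s b _.
Arguments ff_q {A} n phi psi s.
Arguments ff_op {sym ar A} opA s psi t.
Arguments ff_closed {sym ar A} opA S.

(* An element a with gamma(a) <= k is represented by x |-> q_k(a, x), so
   R(a)^T is s |-> q_k(a, s_1, ..., s_k) for every such k.  Dimension bounds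
   are preserved by the e_i, the q_n and the tau-operations, and finitely many
   elements have a common bound; with one k serving all the arguments, axioms
   (C1) and (C4)-(C6) turn each operation of C into the corresponding
   operation of the full functional clone algebra.  Evaluating R(a)^T at the
   sequence of projections (e_1, e_2, ...) gives back a by (C3), hence
   injectivity. *)

From Stdlib Require Import FunctionalExtensionality.
From mathcomp Require Import all_boot.

#[local] Arguments ax_C1 {sym ar c n} i x.
#[local] Arguments ax_C4 {sym ar c k n x y}.

Section Dimension.
Context {sym : Type} {ar : sym -> nat} {C : CloneAlg sym ar}.

Lemma dim_le_leq {a : C} {k m} : dim_le a k -> k <= m -> dim_le a m.
Proof. by move=> Ha km l ml; apply: Ha; apply: leq_trans ml. Qed.

Lemma dim_le_tuple {n} (x : 'I_n -> C) :
  finite_dimensional C -> exists k, forall j, dim_le (x j) k.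
Proof.
move=> fd; have [K HK] := fin_all_exists (fun j => fd (x j)).
by exists (\max_j K j) => j; apply: dim_le_leq (HK j) (leq_bigmax j).
Qed.

Lemma q_indep_last {x : C} {m} {u : 'I_m.+1 -> C} : indep x m ->
  q C m.+1 x u = q C m.+1 x (fun i => if val i < m then u i else e C m.+1).
Proof.
move=> Hx; rewrite -{1}Hx ax_C5; congr (q C _ x).
apply: functional_extensionality => i; case: ifP => _; first exact: ax_C1.
by rewrite ax_C2.
Qed.

Lemma dim_le_e i : dim_le (e C i) i.+1.
Proof.
move=> m im; rewrite /indep.
by rewrite (ax_C1 (Ordinal (ltn_trans im (ltnSn m)))) /= im.
Qed.

Lemma dim_le_op {s} {x : 'I_(ar s) -> C} {k} :
  (forall j, dim_le (x j) k) -> dim_le (op C s x) k.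
Proof.
move=> Hx m km; rewrite /indep ax_C6; congr (op C s).
by apply: functional_extensionality => j; apply: Hx.
Qed.

Lemma dim_le_q {n} {x : C} {y : 'I_n -> C} {m} : n < m ->
  dim_le x m -> (forall i, dim_le (y i) m) -> dim_le (q C n x y) m.
Proof.
move=> nm Hx Hy l ml; rewrite /indep.
have nl : n < l.+1 by rewrite ltnS (leq_trans (ltnW nm) ml).
rewrite (ax_C4 nl) ax_C5.
rewrite (q_indep_last (Hx _ ml)) [RHS](q_indep_last (Hx _ ml)).
congr (q C _ x); apply: functional_extensionality => i.
case: ifP => // il; rewrite /pad_e; case: insub => [j|].
  exact: Hy.
by rewrite ax_C1 /= il.
Qed.

Lemma q_inR (a : C) k : dim_le a k -> inR a k (q C k a).
Proof.
move=> Ha; have Ea : q C k a (evec k) = a by exact: ax_C3.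
by rewrite /inR /representable Ea.
Qed.

End Dimension.

Section BlockAlgebra.
Context {sym : Type} {ar : sym -> nat} {C : CloneAlg sym ar}.
Variable Phi : C -> ((nat -> C) -> C).
Hypothesis Phi_inR :
  forall (a : C) n (f : ('I_n -> C) -> C), inR a n f -> Phi a = top_ext n f.

Lemma Phi_top_ext_q {a : C} {k} : dim_le a k -> Phi a = top_ext k (q C k a).
Proof. by move=> Ha; apply/Phi_inR/q_inR. Qed.

Lemma Phi_e i : Phi (e C i) = ff_e i.
Proof.
rewrite (Phi_top_ext_q (dim_le_e i)); apply: functional_extensionality => s.
by rewrite /top_ext (ax_C1 (Ordinal (ltnSn i))).
Qed.

Hypothesis fdC : finite_dimensional C.

Lemma Phi_op s (x : 'I_(ar s) -> C) :
  Phi (op C s x) = ff_op (op C) s (fun j => Phi (x j)).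
Proof.
have [k Hx] := dim_le_tuple x fdC.
rewrite (Phi_top_ext_q (dim_le_op Hx)); apply: functional_extensionality => t.
rewrite /top_ext /ff_op ax_C6; congr (op C s).
by apply: functional_extensionality => j; rewrite (Phi_top_ext_q (Hx j)).
Qed.

Lemma Phi_q n (x : C) (y : 'I_n -> C) :
  Phi (q C n x y) = ff_q n (Phi x) (fun i => Phi (y i)).
Proof.
have [ky Hy] := dim_le_tuple y fdC; have [kx Hx] := fdC x.
set m := maxn n.+1 (maxn kx ky).
have nm : n < m by rewrite leq_maxl.
have Hx' : dim_le x m by apply: dim_le_leq Hx _; rewrite !leq_max leqnn orbT.
have Hy' i : dim_le (y i) m.
  by apply: dim_le_leq (Hy i) _; rewrite !leq_max leqnn !orbT.
rewrite (Phi_top_ext_q (dim_le_q nm Hx' Hy')) (Phi_top_ext_q Hx').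
apply: functional_extensionality => s; rewrite /ff_q /top_ext.
under [fun i => Phi (y i) s]functional_extensionality => i
  do rewrite (Phi_top_ext_q (Hy' i)).
rewrite (ax_C4 nm) ax_C5; congr (q C _ x).
apply: functional_extensionality => j.
by rewrite /pad_e /seq_upd; case: insub => [i|] //; apply: ax_C1.
Qed.

Lemma Phi_inj : injective Phi.
Proof.
move=> a b Eab; have [ka Ha] := fdC a; have [kb Hb] := fdC b.
have Ha' : dim_le a (maxn ka kb) by apply: dim_le_leq Ha (leq_maxl _ _).
have Hb' : dim_le b (maxn ka kb) by apply: dim_le_leq Hb (leq_maxr _ _).
move: Eab; rewrite (Phi_top_ext_q Ha') (Phi_top_ext_q Hb').
by move=> /(congr1 (fun g => g (e C))); rewrite /top_ext !ax_C3.
Qed.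

Lemma tuple_in_image n (psi : 'I_n -> (nat -> C) -> C) :
  (forall i, exists a, psi i = Phi a) -> exists b, psi = fun i => Phi (b i).
Proof.
by move=> Hpsi; have [b Hb] := fin_all_exists Hpsi; exists b;
  apply: functional_extensionality.
Qed.

Lemma block_algebra_closed : ff_closed (op C) (fun g => exists a : C, g = Phi a).
Proof.
split; first by move=> i; exists (e C i); rewrite Phi_e.
split=> [n _ psi [a ->] /tuple_in_image [b ->] | s psi /tuple_in_image [b ->]].
  by exists (q C n a b); rewrite Phi_q.
by exists (op C s b); rewrite Phi_op.
Qed.

End BlockAlgebra.

Theorem theorem7p6 (sym : Type) (ar : sym -> nat) (C : CloneAlg sym ar)
  (Phi : C -> ((nat -> C) -> C)) :
  finite_dimensional C ->
  (* Phi a = R(a)^T : the common top extension of all members of R(a) *)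
  (forall (a : C) (n : nat) (f : ('I_n -> C) -> C), inR a n f -> Phi a = top_ext n f) ->
  (* R(a) is nonempty, so Phi a is determined *)
  (forall a : C, exists n (f : ('I_n -> C) -> C), inR a n f) /\
  (* the block algebra is a subalgebra of the full functional clone algebra
     with value domain the tau-reduct of C *)
  ff_closed (op C) (fun g => exists a : C, g = Phi a) /\
  (* Phi is injective *)
  (forall a b : C, Phi a = Phi b -> a = b) /\
  (* Phi is a homomorphism of clone tau-algebras *)
  (forall i, Phi (e C i) = ff_e i) /\
  (forall n (x : C) (y : 'I_n -> C),
      Phi (q C n x y) = ff_q n (Phi x) (fun i => Phi (y i))) /\
  (forall (s : sym) (x : 'I_(ar s) -> C),
      Phi (op C s x) = ff_op (op C) s (fun j => Phi (x j))).
Proof.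
move=> fdC Phi_inR; split.
  by move=> a; have [k Ha] := fdC a; exists k, (q C k a); apply: q_inR.
split; first exact: block_algebra_closed.
split; first exact: Phi_inj.
split; first exact: Phi_e.
split; first exact: Phi_q.
exact: Phi_op.
Qed.
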